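(* Let $\Lambda$ be a ring, let $\operatorname{mod}\Lambda$ be the category of finite length right $\Lambda$-modules, and let $T,M\in\operatorname{mod}\Lambda$. If $\varepsilon\colon 0\to T'\to E\to M\to0$ and $\eta\colon 0\to T''\to F\to M\to0$ are universal $\operatorname{add}(T)$-extensions of $M$, then $E\cong F$ modulo $\operatorname{add}(T)$, i.e. $E$ and $F$ are isomorphic as objects of the quotient category $\operatorname{mod}\Lambda/\operatorname{add}(T)$.
   Context: $\operatorname{add}(T)$ is the full subcategory of direct sums of direct summands of $T$. An element $\varepsilon\in\operatorname{Ext}^1(M,T')$ with $T'\in\operatorname{add}(T)$ is a universal $\operatorname{add}(T)$-extension of $M$ if the map $\operatorname{Hom}(T',T)\to\operatorname{Ext}^1(M,T)$, $\phi\mapsto\phi\varepsilon$ (push-out along $\phi$), is surjective. The quotient category $\operatorname{mod}\Lambda/\operatorname{add}(T)$ has the same objects as $\operatorname{mod}\Lambda$ and morphisms modulo those factoring through an object of $\operatorname{add}(T)$. *)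

(* Right Lambda-modules = left modules over the converse ring Lambda^c. *)
From HB Require Import structures.
From mathcomp Require Import all_boot all_order all_algebra.
Set Implicit Arguments. Unset Strict Implicit. Unset Printing Implicit Defensive.
Import GRing.Theory.
Local Open Scope ring_scope.

Section Defs.
Variable L : pzRingType.
Notation rmod := (lmodType L^c).

Definition submodule (V : rmod) (S : V -> Prop) : Prop :=
  [/\ S 0, (forall u v, S u -> S v -> S (u + v)) & (forall (a : L^c) v, S v -> S (a *: v)) ].

Definition subset_of (V : Type) (A B : V -> Prop) := forall v, A v -> B v.

Definition finite_length (V : rmod) : Prop :=
  exists (n : nat) (S : nat -> V -> Prop),
    [/\ (forall i, submodule (S i)),
        (forall v, S 0%N v <-> v = 0),
        (forall v, S n v) &
        (forall i, (i < n)%N ->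
           [/\ subset_of (S i) (S i.+1),
               (exists v, S i.+1 v /\ ~ S i v) &
               (forall N : V -> Prop, submodule N -> subset_of (S i) N ->
                  subset_of N (S i.+1) -> subset_of N (S i) \/ subset_of (S i.+1) N)])].

(* X in add(T): X is a direct summand of T^n for some n, i.e. there are
   s_k : X -> T and r_k : T -> X (k < n) with sum_k r_k o s_k = id_X *)
Definition in_add (T X : rmod) : Prop :=
  exists (n : nat) (s : 'I_n -> {linear X -> T}) (r : 'I_n -> {linear T -> X}),
    forall x, \sum_(k < n) r k (s k x) = x.

Definition short_exact (A B C : rmod) (i : {linear A -> B}) (p : {linear B -> C}) : Prop :=
  [/\ injective i, (forall c, exists b, p b = c) &
      (forall b, p b = 0 <-> exists a, i a = b)].

(* eps : 0 -> T' -i-> E -p-> M -> 0 is a universal add(T)-extension of M: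
   T' in add(T), and the map Hom(T',T) -> Ext^1(M,T), phi |-> phi eps, is
   surjective.  The push-out phi eps is equivalent to an extension
   0 -> T -j-> X -q-> M -> 0 iff there is psi : E -> X with
   psi o i = j o phi and q o psi = p. *)
Definition universal_add_ext (T M T' E : rmod)
    (i : {linear T' -> E}) (p : {linear E -> M}) : Prop :=
  [/\ in_add T T', short_exact i p &
      forall (X : rmod) (j : {linear T -> X}) (q : {linear X -> M}),
        finite_length X -> short_exact j q ->
        exists (phi : {linear T' -> T}) (psi : {linear E -> X}),
          (forall t, psi (i t) = j (phi t)) /\ (forall e, q (psi e) = p e)].

Definition factors_through_add (T V W : rmod) (f : V -> W) : Prop :=
  exists (Z : rmod) (h : {linear V -> Z}) (g : {linear Z -> W}),
    finite_length Z /\ in_add T Z /\ forall v, f v = g (h v).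

Definition iso_mod_add (T V W : rmod) : Prop :=
  exists (f : {linear V -> W}) (g : {linear W -> V}),
    factors_through_add T (fun v => g (f v) - v) /\
    factors_through_add T (fun w => f (g w) - w).
End Defs.

(* Ext^1(M, -) is additive, so universality of [eps] extends from [T] to every
   object of add(T): writing [T''] as a retract of [T^n] via [s_k], [r_k], the
   push-outs of [eta] along the [s_k] are extensions of [M] by [T], hence
   receive maps from [E] over [M], and the retraction glues them into a map
   [f : E -> F] over [M].  Symmetrically there is [g : F -> E] over [M].  Then
   [g f - 1] and [f g - 1] vanish on [M], so they factor through the kernels
   [T'] and [T''], which lie in add(T). *)

From HB Require Import structures.
From mathcomp Require Import all_boot all_order all_algebra.
From Stdlib Require Import ClassicalEpsilon FunctionalExtensionality PropExtensionality.
Set Implicit Arguments. Unset Strict Implicit. Unset Printing Implicit Defensive.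
Import GRing.Theory.
Local Open Scope ring_scope.

Section LinearOf.
Variables (R : pzRingType) (U W : lmodType R) (f : U -> W) (fL : linear f).

(* Carrying the linearity proof in the term lets canonical structure
   inference recover [fL] from [linear_of fL]. *)
Definition linear_of of linear f := f.
HB.instance Definition _ := GRing.isLinear.Build R U W *:%R (linear_of fL) fL.
End LinearOf.

Record submod (R : pzRingType) (V : lmodType R) := Submod {
  submod_mem :> V -> Prop;
  submod0 : submod_mem 0;
  submodD : forall u v, submod_mem u -> submod_mem v -> submod_mem (u + v);
  submodZ : forall (a : R) v, submod_mem v -> submod_mem (a *: v) }.

Section Quotient.
Variables (R : pzRingType) (V : lmodType R) (N : submod V).

Lemma submodN v : N v -> N (- v).
Proof. by move=> Nv; rewrite -scaleN1r; apply: submodZ. Qed.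

Lemma submodB u v : N u -> N v -> N (u - v).
Proof. by move=> Nu Nv; apply: submodD => //; apply: submodN. Qed.

(* Elements of the quotient are the canonical representatives chosen by
   [qrep], which depends only on the coset of [x]. *)
Definition qrep (x : V) : V := epsilon (inhabits 0) (fun y => N (x - y)).

Lemma qrepP x : N (x - qrep x).
Proof.
apply: (epsilon_spec (inhabits 0) (fun y => N (x - y))).
by exists x; rewrite subrr; apply: submod0.
Qed.

Lemma qrep_eq x y : N (x - y) -> qrep x = qrep y.
Proof.
move=> Nxy; rewrite /qrep; congr epsilon; apply: functional_extensionality => z.
apply: propositional_extensionality; split=> Nz.
  have -> : y - z = (x - z) - (x - y) by rewrite opprB [RHS]addrC addrA subrK.
  exact: submodB.
have -> : x - z = (x - y) + (y - z) by rewrite addrA subrK.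
exact: submodD.
Qed.

Lemma qrepK x : qrep (qrep x) = qrep x.
Proof. exact/esym/qrep_eq/qrepP. Qed.

Definition quot := {x : V | qrep x == x}.
HB.instance Definition _ := [isSub for (@sval V (fun x => qrep x == x))].
HB.instance Definition _ := [Choice of quot by <:].

Definition qpi (x : V) : quot := exist _ (qrep x) (introT eqP (qrepK x)).

Lemma qpi_val (a : quot) : qpi (val a) = a.
Proof. by case: a => x qx; apply: val_inj; apply/eqP. Qed.

Lemma val_qpi x : N (val (qpi x) - x).
Proof. by rewrite -opprB; apply/submodN/qrepP. Qed.

Lemma qpi_eqP x y : qpi x = qpi y <-> N (x - y).
Proof.
split=> [qxy | Nxy]; last by apply: val_inj; apply: qrep_eq.
have /= rxy := congr1 val qxy; have := submodB (qrepP x) (qrepP y).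
by rewrite rxy opprB addrA subrK.
Qed.

Definition qadd (a b : quot) := qpi (val a + val b).
Definition qopp (a : quot) := qpi (- val a).
Definition qscale (c : R) (a : quot) := qpi (c *: val a).

Let qaddE x y : qadd (qpi x) (qpi y) = qpi (x + y).
Proof. by apply/qpi_eqP; rewrite opprD addrACA; apply: submodD; apply: val_qpi. Qed.

Let qoppE x : qopp (qpi x) = qpi (- x).
Proof. by apply/qpi_eqP; rewrite -opprD; apply/submodN/val_qpi. Qed.

Let qscaleE c x : qscale c (qpi x) = qpi (c *: x).
Proof. by apply/qpi_eqP; rewrite -scalerBr; apply/submodZ/val_qpi. Qed.

Let qaddA : associative qadd.
Proof. by move=> a b c; rewrite -[a]qpi_val -[b]qpi_val -[c]qpi_val !qaddE addrA. Qed.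
Let qaddC : commutative qadd.
Proof. by move=> a b; rewrite -[a]qpi_val -[b]qpi_val !qaddE addrC. Qed.
Let qadd0 : left_id (qpi 0) qadd.
Proof. by move=> a; rewrite -[a]qpi_val qaddE add0r. Qed.
Let qaddN : left_inverse (qpi 0) qopp qadd.
Proof. by move=> a; rewrite -[a]qpi_val qoppE qaddE addNr. Qed.
HB.instance Definition _ := GRing.isZmodule.Build quot qaddA qaddC qadd0 qaddN.

Let qpi_add x y : qpi x + qpi y = qpi (x + y). Proof. exact: qaddE. Qed.

Let qscaleA a b v : qscale a (qscale b v) = qscale (a * b) v.
Proof. by rewrite -[v]qpi_val !qscaleE scalerA. Qed.
Let qscale1 : left_id 1 qscale.
Proof. by move=> v; rewrite -[v]qpi_val qscaleE scale1r. Qed.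
Let qscaleDr : right_distributive qscale +%R.
Proof.
move=> a u v; rewrite -[u]qpi_val -[v]qpi_val.
by rewrite qpi_add !qscaleE qpi_add scalerDr.
Qed.
Let qscaleDl v : {morph qscale^~ v : a b / a + b}.
Proof. by move=> a b; rewrite -[v]qpi_val !qscaleE qpi_add scalerDl. Qed.
HB.instance Definition _ :=
  GRing.Zmodule_isLmodule.Build R quot qscaleA qscale1 qscaleDr qscaleDl.

Lemma qpi_is_linear : linear qpi.
Proof. by move=> c x y; rewrite -qpi_add; congr (_ + _); rewrite -qscaleE. Qed.
HB.instance Definition _ := GRing.isLinear.Build R V quot *:%R qpi qpi_is_linear.

End Quotient.

Section FiniteLength.
Variable L : pzRingType.
Implicit Types (A B C : lmodType L^c).

Definition composition_step (V : lmodType L^c) (S S' : V -> Prop) : Prop :=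
  [/\ subset_of S S', (exists v, S' v /\ ~ S v) &
      (forall N : V -> Prop, submodule N -> subset_of S N ->
         subset_of N S' -> subset_of N S \/ subset_of S' N)].

Definition image_of A B (f : A -> B) (S : A -> Prop) (b : B) : Prop :=
  exists a, S a /\ f a = b.

Lemma submodule_image A B (f : {linear A -> B}) S :
  submodule S -> submodule (image_of f S).
Proof.
case=> S0 SD SZ; split; first by exists 0; rewrite linear0.
- move=> _ _ [a [Sa <-]] [b [Sb <-]].
  by exists (a + b); rewrite linearD; split; first exact: SD.
- move=> c _ [a [Sa <-]].
  by exists (c *: a); rewrite linearZ; split; first exact: SZ.
Qed.

Lemma submodule_preimage A B (f : {linear A -> B}) S :
  submodule S -> submodule (fun a => S (f a)).
Proof.
case=> S0 SD SZ; split; first by rewrite linear0.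
- by move=> u v Su Sv; rewrite linearD; apply: SD.
- by move=> c v Sv; rewrite linearZ; apply: SZ.
Qed.

Lemma composition_step_image A B (j : {linear A -> B}) S S' :
  injective j -> composition_step S S' ->
  composition_step (image_of j S) (image_of j S').
Proof.
move=> jinj [SS' [v [S'v nSv]] maxS]; split.
- by move=> _ [a [Sa <-]]; exists a; split; first exact: SS'.
- exists (j v); split; first by exists v.
  by case=> a [Sa /jinj eav]; apply: nSv; rewrite -eav.
move=> N Nsub SN NS'.
have SpreN : subset_of S (fun a => N (j a)) by move=> a Sa; apply: SN; exists a.
have preNS' : subset_of (fun a => N (j a)) S' by move=> a /NS' [a' [S'a' /jinj <-]].
have [preNS | S'preN] := maxS _ (submodule_preimage j Nsub) SpreN preNS'.
  left=> b Nb; have [a [_ eab]] := NS' b Nb.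
  by exists a; split=> //; apply: preNS; rewrite eab.
by right=> _ [a [S'a <-]]; apply: S'preN.
Qed.

Lemma composition_step_preimage A B (q : {linear A -> B}) S S' :
  (forall b, exists a, q a = b) -> submodule S -> composition_step S S' ->
  composition_step (fun a => S (q a)) (fun a => S' (q a)).
Proof.
move=> qsurj [S0 SD SZ] [SS' [c [S'c nSc]] maxS]; split.
- by move=> a /SS'.
- by have [a qac] := qsurj c; exists a; rewrite qac.
move=> N Nsub SN NS'.
have SimN : subset_of S (image_of q N).
  move=> c' Sc'; have [a qac'] := qsurj c'.
  by exists a; split=> //; apply: SN; rewrite qac'.
have imNS' : subset_of (image_of q N) S' by move=> _ [a [Na <-]]; apply: NS'.
have [imNS | S'imN] := maxS _ (submodule_image q Nsub) SimN imNS'.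
  by left=> a Na; apply: imNS; exists a.
right=> a S'qa; have [a' [Na' qa'a]] := S'imN _ S'qa.
have Naa' : N (a - a') by apply: SN; rewrite linearB qa'a subrr.
by case: Nsub => _ ND _; rewrite -(subrK a' a); apply: ND.
Qed.

Lemma composition_step_extl (V : lmodType L^c) (S1 S2 S' : V -> Prop) :
  (forall v, S1 v <-> S2 v) -> composition_step S1 S' -> composition_step S2 S'.
Proof.
move=> S12 [S1S' [v [S'v nS1v]] maxS]; split.
- by move=> u /S12 /S1S'.
- by exists v; split=> // /S12.
move=> N Nsub S2N NS'.
have [N1|] := maxS N Nsub (fun u S1u => S2N u (proj1 (S12 u) S1u)) NS'; last by right.
by left=> u /N1 /S12.
Qed.

Lemma short_exact_comp0 A B C (j : {linear A -> B}) (q : {linear B -> C}) :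
  short_exact j q -> forall a, q (j a) = 0.
Proof. by case=> _ _ ker a; apply/ker; exists a. Qed.

(* Stack the image of a composition series of [A] below the preimage of one
   of [C]. *)
Lemma finite_length_ext A B C (j : {linear A -> B}) (q : {linear B -> C}) :
  short_exact j q -> finite_length A -> finite_length C -> finite_length B.
Proof.
move=> [jinj qsurj qker] [n [SA [SAsub SA0 SAn SAstep]]].
move=> [m [SC [SCsub SC0 SCm SCstep]]].
pose SB k := if (k <= n)%N then image_of j (SA k) else fun b => SC (k - n)%N (q b).
have imA_kerq b : image_of j (SA n) b <-> SC 0%N (q b).
  rewrite SC0 qker; split=> [[a [_ <-]] | [a <-]]; first by exists a.
  by exists a; split; first exact: SAn.
have SBl k : (k <= n)%N -> SB k = image_of j (SA k) by rewrite /SB => ->.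
have SBr k b : (n <= k)%N -> SB k b <-> SC (k - n)%N (q b).
  by move=> nk; rewrite /SB; case: (ltngtP k n) nk => // -> _; rewrite subnn.
exists (n + m)%N, SB; split.
- move=> k; rewrite /SB; case: ifP => _; first exact: submodule_image.
  exact: submodule_preimage.
- move=> b; rewrite SBl // /image_of.
  split=> [[a [/SA0 -> <-]] | ->]; first exact: linear0.
  by exists 0; split; [apply/SA0 | rewrite linear0].
- by move=> b; apply/SBr; [apply: leq_addr | rewrite addKn; apply: SCm].
move=> k kn; case: (ltnP k n) => [kltn | nk].
  rewrite (SBl k (ltnW kltn)) (SBl k.+1 kltn).
  by apply: composition_step_image; last exact: SAstep.
have kn' : (k - n < m)%N by rewrite ltn_subLR.
apply: (composition_step_extl (S1 := fun b => SC (k - n)%N (q b))).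
  by move=> b; rewrite SBr.
rewrite /SB ltnNge nk /= subSn //.
exact: composition_step_preimage qsurj (SCsub _) (SCstep _ kn').
Qed.

End FiniteLength.

Section Pushout.
Variables (L : pzRingType) (T T2 F M : lmodType L^c).
Variables (s : {linear T2 -> T}) (i2 : {linear T2 -> F}) (p2 : {linear F -> M}).

(* The push-out of [0 -> T2 -> F -> M -> 0] along [s] is
   [(T * F) / {(s t, - i2 t) | t in T2}]. *)
Definition po_rel (v : T * F) : Prop := exists t, v = (s t, - i2 t).

Let po_rel0 : po_rel 0.
Proof. by exists 0; rewrite !linear0. Qed.

Let po_relD u v : po_rel u -> po_rel v -> po_rel (u + v).
Proof. by move=> [t ->] [t' ->]; exists (t + t'); rewrite !linearD. Qed.

Let po_relZ (a : L^c) v : po_rel v -> po_rel (a *: v).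
Proof. by move=> [t ->]; exists (a *: t); rewrite !linearZ. Qed.

Definition po_submod := Submod po_rel0 po_relD po_relZ.
Definition pushout := quot po_submod.

Definition po_inl (t : T) : pushout := qpi po_submod (t, 0).
Definition po_inr (y : F) : pushout := qpi po_submod (0, y).

Lemma po_inl_is_linear : linear po_inl.
Proof.
move=> a x y; rewrite /po_inl -linearP.
by congr (qpi _ (_, _)); rewrite /= scaler0 addr0.
Qed.
HB.instance Definition _ :=
  GRing.isLinear.Build L^c T pushout *:%R po_inl po_inl_is_linear.

Lemma po_inr_is_linear : linear po_inr.
Proof.
move=> a x y; rewrite /po_inr -linearP.
by congr (qpi _ (_, _)); rewrite /= scaler0 addr0.
Qed.
HB.instance Definition _ :=
  GRing.isLinear.Build L^c F pushout *:%R po_inr po_inr_is_linear.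

Lemma po_inr_comp t : po_inr (i2 t) = po_inl (s t).
Proof.
apply/qpi_eqP; exists (- t); rewrite !linearN opprK.
by congr (_, _); [exact: sub0r | exact: subr0].
Qed.

Hypothesis i2p2_exact : short_exact i2 p2.

Definition po_pr (a : pushout) : M := p2 (val a).2.

Lemma po_pr_qpi x : po_pr (qpi po_submod x) = p2 x.2.
Proof.
have [t /(congr1 (fun v => p2 v.2)) /=] := val_qpi po_submod x.
rewrite linearB linearN (short_exact_comp0 i2p2_exact) oppr0.
by move=> /eqP; rewrite subr_eq0 => /eqP.
Qed.

Lemma po_pr_is_linear : linear po_pr.
Proof.
by move=> a x y; rewrite -[x]qpi_val -[y]qpi_val -linearP !po_pr_qpi linearP.
Qed.

Definition po_prL : {linear pushout -> M} := linear_of po_pr_is_linear.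

Lemma po_pr_inr y : po_prL (po_inr y) = p2 y.
Proof. exact: po_pr_qpi. Qed.

Lemma po_pr_inl t : po_prL (po_inl t) = 0.
Proof. exact: etrans (po_pr_qpi (t, 0)) (linear0 p2). Qed.

Lemma qpi_pair x : qpi po_submod x = po_inl x.1 + po_inr x.2.
Proof.
case: x => x1 x2; rewrite /po_inl /po_inr -linearD.
by congr (qpi _ (_, _)); [exact/esym/addr0 | exact/esym/add0r].
Qed.

Lemma po_inl_inj : injective po_inl.
Proof.
case: i2p2_exact => i2inj _ _ x y /qpi_eqP [t xyt].
have /= /eqP := congr1 snd xyt.
rewrite subr0 eq_sym oppr_eq0 -(linear0 i2) => /eqP /i2inj t0.
by apply/eqP; rewrite -subr_eq0; have /= -> := congr1 fst xyt; rewrite t0 linear0.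
Qed.

Lemma pushout_exact : short_exact po_inl po_prL.
Proof.
case: i2p2_exact => _ p2surj p2ker; split; first exact: po_inl_inj.
  by move=> c; have [b <-] := p2surj c; exists (po_inr b); apply: po_pr_inr.
move=> b; split=> [| [a <-]]; last exact: po_pr_inl.
rewrite -[b]qpi_val qpi_pair linearD po_pr_inl po_pr_inr add0r => /p2ker [a <-].
by exists ((val b).1 + s a); rewrite po_inr_comp linearD.
Qed.

End Pushout.

Section Correction.
Variables (R : pzRingType) (T X M E F : lmodType R).
Variables (j : T -> X) (q : {linear X -> M}) (psi : E -> X) (v : F -> X).

Definition correction (e : E) (y : F) : T :=
  epsilon (inhabits 0) (fun t => j t = psi e - v y).

Hypothesis kerq : forall x, q x = 0 -> exists t, j t = x.

Lemma correctionP e y : q (psi e) = q (v y) -> j (correction e y) = psi e - v y.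
Proof.
move=> qe; apply: (epsilon_spec (inhabits 0) (fun t => j t = psi e - v y)).
by apply: kerq; rewrite linearB qe subrr.
Qed.

End Correction.

Section LiftOverBase.
Variables (L : pzRingType) (T M E T2 F : lmodType L^c).
Variables (p : {linear E -> M}) (i2 : {linear T2 -> F}) (p2 : {linear F -> M}).
Hypothesis i2p2_exact : short_exact i2 p2.
Variables (n : nat) (s : 'I_n -> {linear T2 -> T}) (r : 'I_n -> {linear T -> T2}).
Hypothesis rs_id : forall x, \sum_(k < n) r k (s k x) = x.
Variable psi : forall k, {linear E -> pushout (s k) i2}.
Hypothesis psi_over : forall k e, po_prL (s k) i2p2_exact (psi k e) = p e.

Let corr k := correction (po_inl (s k) i2) (psi k) (po_inr (s k) i2).

Let corrP k e y :
  p2 y = p e -> po_inl (s k) i2 (corr k e y) = psi k e - po_inr (s k) i2 y.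
Proof.
move=> ye; apply: (correctionP (q := po_prL (s k) i2p2_exact)).
  by case: (pushout_exact (s k) i2p2_exact) => _ _ ker x /ker.
by rewrite psi_over po_pr_inr ye.
Qed.

Let lift0 (e : E) : F := epsilon (inhabits 0) (fun y => p2 y = p e).

Let lift0P e : p2 (lift0 e) = p e.
Proof.
apply: (epsilon_spec (inhabits 0) (fun y => p2 y = p e)).
by case: i2p2_exact => _ surj _; apply: surj.
Qed.

(* Each [corr k e y] measures how far [y] is from lifting [psi k e]; the
   retraction [r] glues these defects into a correction of [y] inside [T2]. *)
Definition lift (e : E) : F :=
  lift0 e + i2 (\sum_(k < n) r k (corr k e (lift0 e))).

Lemma liftE e y :
  p2 y = p e -> lift e = y + i2 (\sum_(k < n) r k (corr k e y)).
Proof.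
move=> ye; have [w i2w] : exists w, i2 w = lift0 e - y.
  by case: i2p2_exact => _ _ ker; apply/ker; rewrite linearB lift0P ye subrr.
have corr_lift0 k : corr k e (lift0 e) = corr k e y - s k w.
  apply: (po_inl_inj (s := s k) i2p2_exact).
  rewrite linearB /= !corrP // -po_inr_comp -addrA -opprD -linearD i2w.
  by rewrite [y + _]addrC subrK.
rewrite /lift (eq_bigr (fun k => r k (corr k e y) - r k (s k w))); last first.
  by move=> k _; rewrite corr_lift0 linearB.
by rewrite sumrB rs_id linearB i2w opprB addrCA [lift0 e + _]addrC subrK addrC.
Qed.

Lemma lift_is_linear : linear lift.
Proof.
move=> a e1 e2; rewrite (liftE (y := a *: lift0 e1 + lift0 e2)); last first.
  by rewrite linearP !lift0P linearP.
have corrP_lin k : corr k (a *: e1 + e2) (a *: lift0 e1 + lift0 e2)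
                 = a *: corr k e1 (lift0 e1) + corr k e2 (lift0 e2).
  apply: (po_inl_inj (s := s k) i2p2_exact).
  rewrite linearP /= !corrP ?lift0P //.
    rewrite (linearP (psi k)) (linearP (po_inr (s k) i2)).
    by rewrite scalerBr opprD addrACA.
  by rewrite linearP !lift0P linearP.
under eq_bigr do rewrite corrP_lin linearP.
by rewrite big_split -scaler_sumr linearP scalerDr addrACA.
Qed.

Lemma lift_over e : p2 (lift e) = p e.
Proof. by rewrite linearD lift0P (short_exact_comp0 i2p2_exact) addr0. Qed.

End LiftOverBase.

Lemma universal_add_ext_lift (L : pzRingType) (T M T' E T2 F : lmodType L^c)
    (i : {linear T' -> E}) (p : {linear E -> M})
    (i2 : {linear T2 -> F}) (p2 : {linear F -> M}) :
  finite_length T -> finite_length M -> universal_add_ext T i p ->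
  in_add T T2 -> short_exact i2 p2 ->
  exists f : {linear E -> F}, forall e, p2 (f e) = p e.
Proof.
move=> flT flM [_ _ univ] [n [s [r rs_id]]] ex2.
have psi_ex k : exists psi : {linear E -> pushout (s k) i2},
    forall e, po_prL (s k) ex2 (psi e) = p e.
  have po_ex := pushout_exact (s k) ex2.
  have [_ [psi [_ psi_over]]] := univ _ _ _ (finite_length_ext po_ex flT flM) po_ex.
  by exists psi.
pose psi k := proj1_sig (constructive_indefinite_description _ (psi_ex k)).
have psi_over k e : po_prL (s k) ex2 (psi k e) = p e.
  exact: (proj2_sig (constructive_indefinite_description _ (psi_ex k))).
by exists (linear_of (lift_is_linear rs_id psi_over)); apply: lift_over.
Qed.

Lemma factors_through_add_kernel (L : pzRingType) (T T' E M : lmodType L^c)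
    (i : {linear T' -> E}) (p : {linear E -> M}) (d : {linear E -> E}) :
  finite_length T' -> in_add T T' -> short_exact i p ->
  (forall e, p (d e) = 0) -> factors_through_add T d.
Proof.
move=> flT' addT' [iinj _ pker] pd0.
pose h e := epsilon (inhabits 0) (fun t => i t = d e).
have hP e : i (h e) = d e.
  by apply: (epsilon_spec (inhabits 0) (fun t => i t = d e)); apply/pker.
have h_lin : linear h by move=> a x y; apply: iinj; rewrite linearP !hP linearP.
by exists T', (linear_of h_lin), i; do 2!split=> //; move=> e; rewrite /= hP.
Qed.

Lemma comp_subid_is_linear (R : pzRingType) (U V : lmodType R)
    (f : {linear U -> V}) (g : {linear V -> U}) :
  linear (fun u => g (f u) - u).
Proof. by move=> a x y; rewrite (linearP f) (linearP g) scalerBr opprD addrACA. Qed.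

Theorem corollary1p3 (L : pzRingType) (T M T' E T'' F : lmodType L^c)
  (i : {linear T' -> E}) (p : {linear E -> M})
  (i' : {linear T'' -> F}) (p' : {linear F -> M}) :
  finite_length T -> finite_length M ->
  finite_length T' -> finite_length E -> finite_length T'' -> finite_length F ->
  universal_add_ext T i p -> universal_add_ext T i' p' ->
  iso_mod_add T E F.
Proof.
move=> flT flM flT' _ flT'' _ univ univ'.
have [addT' ex _] := univ; have [addT'' ex' _] := univ'.
have [f pf] := universal_add_ext_lift flT flM univ addT'' ex'.
have [g pg] := universal_add_ext_lift flT flM univ' addT' ex.
exists f, g; split.
- apply: (factors_through_add_kernel flT' addT' ex
           (d := linear_of (comp_subid_is_linear f g))).
  by move=> e; rewrite linearB /= pg pf subrr.
- apply: (factors_through_add_kernel flT'' addT'' ex'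
           (d := linear_of (comp_subid_is_linear g f))).
  by move=> e; rewrite linearB /= pf pg subrr.
Qed.
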